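(* Let nonempty active action sets $A_{l,i}\subseteq\mathcal{A}$ be given, and let $\eta$ be the random exploration policy in which, independently for each state $(l,i)$, with probability $\frac{k}{2H}$ the action $e_{l,i}$ is drawn uniformly from $A_{l,i}$, and with probability $1-\frac{k}{2H}$ it is set to $e_{l,i}=\arg\max_{a\in A_{l,i}}p_i(l\mid l,a)$. Let $Q_{l,i}$ be the probability that $\eta$ visits state $(l,i)$. Then for any $i\in[H-1]$ and $l\in[k]$: $$Q_{s,i+1}\ \ge\ \max_{a\in A_{l,i}}\frac{k}{2HA}\,Q_{l,i}\,p_i(s\mid l,a)\qquad\text{for all } s<k,$$ and $$Q_{l,i+1}\ \ge\ \max_{a\in A_{l,i}}\Big(1-\frac{k}{2H}\Big)Q_{l,i}\,p_i(l\mid l,a)\ \ge\ \max_{a\in A_{l,i}}e^{-k/H}\,Q_{l,i}\,p_i(l\mid l,a).$$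
   Context: An episodic MDP has states $(l,i)$, $l\in[k]$, $i\in[H]$, with $k\le H$, a fixed start state in stage $1$, and an action set $\mathcal{A}$ of size $A$. For $i\in[H-1]$, action $a$ at state $(l,i)$ moves to state $(s,i+1)$ with probability $p_i(s\mid l,a)$, independently of everything else. (In the paper's setting the MDP is ordered: start state $(k,1)$, $p_i(s\mid l,a)=0$ for $s>l$, and the maximizer of $p_i(l\mid l,\cdot)$ over $A_{l,i}$ is identifiable from a known total order on actions.) A policy assigning an action to every state is executed by taking the assigned action at each visited state. *)

From HB Require Import structures.
From mathcomp Require Import all_boot all_order all_algebra.
From mathcomp Require Import all_classical all_reals all_analysis.
Set Implicit Arguments. Unset Strict Implicit. Unset Printing Implicit Defensive.
Import Order.TTheory GRing.Theory Num.Theory.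
Local Open Scope ring_scope.

(* Conventions (0-indexed): levels l : 'I_k, stages i : 'I_H,
   actions in a finite type Act (so A = #|Act|).
   p i l a s  = p_i(s | l, a)   (transition from (l,i) to (s,i+1)).
   Aset l i   = active action set A_{l,i}.
   amax l i   = the (fixed) argmax of p_i(l | l, .) over A_{l,i}. *)

Definition eps (R : realType) (k H : nat) : R := k%:R / (2 * H%:R).

Definition eprob (R : realType) (k H : nat) (Act : finType)
  (Aset : 'I_k -> 'I_H -> {set Act}) (amax : 'I_k -> 'I_H -> Act)
  (l : 'I_k) (i : 'I_H) (a : Act) : R :=
  eps R k H * ((a \in Aset l i)%:R / #|Aset l i|%:R)
  + (1 - eps R k H) * (a == amax l i)%:R.

(* probability of a deterministic policy pi under eta
   (independent choices at every state) *)
Definition policy_prob (R : realType) (k H : nat) (Act : finType)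
  (Aset : 'I_k -> 'I_H -> {set Act}) (amax : 'I_k -> 'I_H -> Act)
  (pi : {ffun 'I_k * 'I_H -> Act}) : R :=
  \prod_(x : 'I_k * 'I_H) @eprob R k H Act Aset amax x.1 x.2 (pi x).

Fixpoint vdist (R : realType) (k H : nat) (Act : finType)
  (p : 'I_H -> 'I_k -> Act -> 'I_k -> R) (s0 : 'I_k)
  (pi : {ffun 'I_k * 'I_H -> Act}) (n : nat) : 'I_k -> R :=
  match n with
  | 0 => fun s => (s == s0)%:R
  | n'.+1 => fun s =>
      match (insub n' : option 'I_H) with
      | Some j => \sum_(l : 'I_k) @vdist R k H Act p s0 pi n' l * p j l (pi (l, j)) s
      | None => 0
      end
  end.

Definition Qvisit (R : realType) (k H : nat) (Act : finType)
  (p : 'I_H -> 'I_k -> Act -> 'I_k -> R) (s0 : 'I_k)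
  (Aset : 'I_k -> 'I_H -> {set Act}) (amax : 'I_k -> 'I_H -> Act)
  (l : 'I_k) (n : nat) : R :=
  \sum_(pi : {ffun 'I_k * 'I_H -> Act})
     @policy_prob R k H Act Aset amax pi * @vdist R k H Act p s0 pi n l.

From mathcomp Require Import all_boot all_order all_algebra.
From mathcomp Require Import all_classical all_reals all_analysis.
From mathcomp Require Import lra.
Set Implicit Arguments. Unset Strict Implicit. Unset Printing Implicit Defensive.
Import Order.TTheory GRing.Theory Num.Theory.
Local Open Scope ring_scope.

(* Under eta the actions chosen at different states are independent, and
   whether (l, i) is visited only depends on the choices at stages < i.
   Hence conditioning on the choice at (l, i) factorises: Q_{s,i+1} is at
   least Q_{l,i} times the eta-average of p_i(s | l, .).  The law of the
   choice at (l, i) puts mass at least k/(2HA) on every active action and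
   at least 1 - k/(2H) on the argmax, and 1 - x/2 >= e^{-x} on [0, 1]. *)

Section ProductWeights.

Variables (R : comPzSemiRingType) (X A : finType) (w : X -> A -> R).

Definition ffun_set (f : {ffun X -> A}) (x0 : X) (b : A) : {ffun X -> A} :=
  [ffun x => if x == x0 then b else f x].

Lemma ffun_set_id f x0 b : ffun_set f x0 b x0 = b.
Proof. by rewrite ffunE eqxx. Qed.

Lemma ffun_setK f x0 b : ffun_set (ffun_set f x0 b) x0 (f x0) = f.
Proof. by apply/ffunP => x; rewrite !ffunE; case: eqP => // ->. Qed.

Lemma prod_weight_set f x0 b :
  (\prod_x w x (ffun_set f x0 b x)) * w x0 (f x0)
  = (\prod_x w x (f x)) * w x0 b.
Proof.
rewrite (bigD1 x0) //= [in RHS](bigD1 x0) //= ffun_set_id.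
rewrite (eq_bigr (fun x => w x (f x))) => [|x /negbTE x_neq]; last first.
  by rewrite ffunE x_neq.
by rewrite mulrAC [RHS]mulrAC [w x0 b * _]mulrC.
Qed.

Lemma sum_prod_weight_factor x0 (G : {ffun X -> A} -> R) (g : A -> R) :
  (forall f b, G (ffun_set f x0 b) = G f) -> \sum_b w x0 b = 1 ->
  \sum_(f : {ffun X -> A}) (\prod_x w x (f x)) * (G f * g (f x0))
  = (\sum_(f : {ffun X -> A}) (\prod_x w x (f x)) * G f) * \sum_b w x0 b * g b.
Proof.
move=> G_indep w_sum1.
rewrite mulr_suml; under [RHS]eq_bigr => f _ do rewrite mulr_sumr.
rewrite pair_big /=.
pose swap (q : {ffun X -> A} * A) := (ffun_set q.1 x0 q.2, q.1 x0).
have swapK : involutive swap by case=> f b; rewrite /swap /= ffun_setK ffun_set_id.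
rewrite (reindex_inj (inv_inj swapK)) /= -(pair_big xpredT xpredT
  (fun f b => (\prod_x w x (ffun_set f x0 b x)) * G (ffun_set f x0 b)
              * (w x0 (f x0) * g (f x0)))) /=.
apply: eq_bigr => f _.
under [RHS]eq_bigr => b _.
  rewrite G_indep mulrAC mulrA prod_weight_set -!mulrA.
  over.
by rewrite -mulr_sumr -mulr_suml w_sum1 mul1r [g _ * _]mulrC.
Qed.

End ProductWeights.

Section Exploration.

Variables (R : realType) (k H : nat) (Act : finType).
Variables (Aset : 'I_k -> 'I_H -> {set Act}) (amax : 'I_k -> 'I_H -> Act).
Hypothesis Aset_neq0 : forall l i, Aset l i != finset.set0.
Hypothesis eps_le1 : eps R k H <= 1.

Local Notation eprob := (eprob R Aset amax).

Lemma eps_ge0 : 0 <= eps R k H.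
Proof. by rewrite /eps divr_ge0 // mulr_ge0. Qed.

Lemma eprob_ge0 l i a : 0 <= eprob l i a.
Proof.
by rewrite /eprob addr_ge0 // mulr_ge0 ?eps_ge0 ?subr_ge0 ?divr_ge0.
Qed.

Lemma sum_eprob l i : \sum_a eprob l i a = 1.
Proof.
rewrite /eprob big_split /= -!mulr_sumr -mulr_suml.
rewrite (eq_bigr (fun a => if a \in Aset l i then 1 else 0)) => [|a _]; last first.
  by case: (a \in Aset l i).
have Aset_gt0 : 0 < #|Aset l i|%:R :> R by rewrite ltr0n card_gt0.
rewrite -big_mkcond /= sumr_const mulfV ?gt_eqF //.
rewrite (bigD1 (amax l i)) //= eqxx big1 => [|a /negbTE -> //].
by rewrite addr0 !mulr1 addrC subrK.
Qed.

Lemma eprob_active_ge l i a : a \in Aset l i -> eps R k H / #|Act|%:R <= eprob l i a.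
Proof.
move=> a_in; rewrite /eprob a_in mul1r -[leLHS]addr0.
apply: lerD; last by rewrite mulr_ge0 ?subr_ge0.
have Aset_gt0 : (0 < #|Aset l i|)%N by apply/card_gt0P; exists a.
have Act_gt0 : (0 < #|Act|)%N by apply/card_gt0P; exists a.
by rewrite ler_wpM2l ?eps_ge0 // lef_pV2 ?posrE ?ltr0n ?ler_nat ?max_card.
Qed.

Lemma eprob_amax_ge l i : 1 - eps R k H <= eprob l i (amax l i).
Proof. by rewrite /eprob eqxx mulr1 lerDr mulr_ge0 ?eps_ge0 ?divr_ge0. Qed.

End Exploration.

Section Visits.

Variables (R : realType) (k H : nat) (Act : finType).
Variables (p : 'I_H -> 'I_k -> Act -> 'I_k -> R) (s0 : 'I_k).
Hypothesis p_ge0 : forall i : 'I_H, (i.+1 < H)%N -> forall l a s, 0 <= p i l a s.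

Lemma eq_vdist (pi pi' : {ffun 'I_k * 'I_H -> Act}) n :
  (forall l (j : 'I_H), (j < n)%N -> pi (l, j) = pi' (l, j)) ->
  vdist p s0 pi n =1 vdist p s0 pi' n.
Proof.
elim: n => [|n IHn] eq_pi s //=.
case: insubP => [j _ val_j|_] //.
apply: eq_bigr => l _.
rewrite IHn => [|l' j' lt_j'n]; last by rewrite eq_pi // ltnW.
by rewrite eq_pi // val_j.
Qed.

Lemma vdist_ge0 pi n s : (n < H)%N -> 0 <= vdist p s0 pi n s.
Proof.
elim: n s => [|n IHn] s lt_nH /=; first by rewrite ler0n.
case: insubP => [j _ val_j|_] //.
apply: sumr_ge0 => l _; rewrite mulr_ge0 ?IHn ?(ltnW lt_nH) //.
by apply: p_ge0; rewrite val_j.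
Qed.

Lemma vdist_succ_ge pi (i : 'I_H) l s : (i.+1 < H)%N ->
  vdist p s0 pi i l * p i l (pi (l, i)) s <= vdist p s0 pi i.+1 s.
Proof.
move=> lt_iH /=; case: insubP => [j _ val_j|]; last by rewrite ltn_ord.
have -> : j = i by apply: val_inj.
rewrite (bigD1 l) //= lerDl sumr_ge0 // => l' _.
by rewrite mulr_ge0 ?vdist_ge0 ?p_ge0 // ltnW.
Qed.

Variables (Aset : 'I_k -> 'I_H -> {set Act}) (amax : 'I_k -> 'I_H -> Act).
Hypothesis Aset_neq0 : forall l i, Aset l i != finset.set0.
Hypothesis eps_le1 : eps R k H <= 1.

Local Notation eprob := (eprob R Aset amax).
Local Notation Q := (Qvisit p s0 Aset amax).

Lemma policy_prob_ge0 pi : 0 <= policy_prob R Aset amax pi.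
Proof. by apply: prodr_ge0 => x _; apply: eprob_ge0. Qed.

Lemma Qvisit_ge0 l n : (n < H)%N -> 0 <= Q l n.
Proof.
by move=> lt_nH; apply: sumr_ge0 => pi _; rewrite mulr_ge0 ?policy_prob_ge0 ?vdist_ge0.
Qed.

Lemma Qvisit_succ_ge (i : 'I_H) l s : (i.+1 < H)%N ->
  Q l i * \sum_a eprob l i a * p i l a s <= Q s i.+1.
Proof.
move=> lt_iH.
rewrite /Qvisit -(@sum_prod_weight_factor _ _ _ (fun x a => eprob x.1 x.2 a) (l, i)
  (fun pi => vdist p s0 pi i l) (fun a => p i l a s)) /=.
- apply: ler_sum => pi _.
  by rewrite ler_wpM2l ?policy_prob_ge0 ?vdist_succ_ge.
- move=> pi a; apply: eq_vdist => l' j lt_ji; rewrite ffunE.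
  by case: eqP => // -[_ j_eq]; rewrite j_eq ltnn in lt_ji.
- exact: sum_eprob.
Qed.

Lemma Qvisit_succ_ge_action (i : 'I_H) l s a : (i.+1 < H)%N ->
  Q l i * (eprob l i a * p i l a s) <= Q s i.+1.
Proof.
move=> lt_iH; apply: le_trans (Qvisit_succ_ge l s lt_iH).
rewrite ler_wpM2l ?Qvisit_ge0 1?ltnW // (bigD1 a) //= lerDl.
by apply: sumr_ge0 => b _; rewrite mulr_ge0 ?eprob_ge0 ?p_ge0.
Qed.

End Visits.

Lemma expRN_le_1Bhalf (R : realType) (x : R) : 0 <= x <= 1 -> expR (- x) <= 1 - x / 2.
Proof.
case/andP => x_ge0 x_le1.
rewrite expRN; apply: le_trans (_ : (1 + x)^-1 <= _).
  by rewrite lef_pV2 ?posrE ?expR_gt0 ?expR_ge1Dx //; lra.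
rewrite -div1r ler_pdivrMr; last by lra.
nra.
Qed.

Theorem lemma9 (R : realType) (k H : nat) (Act : finType)
  (p : 'I_H -> 'I_k -> Act -> 'I_k -> R) (s0 : 'I_k)
  (Aset : 'I_k -> 'I_H -> {set Act}) (amax : 'I_k -> 'I_H -> Act) :
  (0 < k)%N -> (k <= H)%N ->
  (forall (i : 'I_H), (i.+1 < H)%N ->
     forall l a s, 0 <= p i l a s) ->
  (forall (i : 'I_H), (i.+1 < H)%N ->
     forall l a, \sum_(s : 'I_k) p i l a s = 1) ->
  (forall l i, Aset l i != finset.set0) ->
  (forall l i, amax l i \in Aset l i) ->
  (forall l (i : 'I_H), (i.+1 < H)%N ->
     forall a, a \in Aset l i -> p i l a l <= p i l (amax l i) l) ->
  forall (i : 'I_H) (l : 'I_k), (i.+1 < H)%N ->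
    (forall s : 'I_k, (s < k.-1)%N ->
       forall a, a \in Aset l i ->
         k%:R / (2 * H%:R * #|Act|%:R) * @Qvisit R k H Act p s0 Aset amax l i * p i l a s
           <= @Qvisit R k H Act p s0 Aset amax s i.+1)
    /\
    (forall a, a \in Aset l i ->
       (1 - k%:R / (2 * H%:R)) * @Qvisit R k H Act p s0 Aset amax l i * p i l a l
         <= @Qvisit R k H Act p s0 Aset amax l i.+1
       /\
       expR (- (k%:R / H%:R)) * @Qvisit R k H Act p s0 Aset amax l i * p i l a l
         <= (1 - k%:R / (2 * H%:R)) * @Qvisit R k H Act p s0 Aset amax l i * p i l a l).
Proof.
move=> _ le_kH p_ge0 _ Aset_neq0 _ amax_max i l lt_iH.
have H_gt0 : (0 < H)%N := leq_ltn_trans (leq0n i) (ltn_ord i).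
have kH_ge0 : 0 <= k%:R / H%:R :> R by rewrite divr_ge0.
have kH_le1 : k%:R / H%:R <= 1 :> R by rewrite ler_pdivrMr ?ltr0n // mul1r ler_nat.
have epsE : eps R k H = k%:R / H%:R / 2 by rewrite /eps [2 * _]mulrC invfM mulrA.
have eps_le1 : eps R k H <= 1 by rewrite epsE; lra.
have Q_ge0 := Qvisit_ge0 s0 p_ge0 Aset amax eps_le1 l (ltn_ord i).
have step s a := Qvisit_succ_ge_action s0 p_ge0 amax Aset_neq0 eps_le1 l s a lt_iH.
split=> [s _ a a_in | a a_in].
  rewrite mulrAC mulrC; apply: le_trans (step s a).
  rewrite ler_wpM2l // ler_wpM2r ?p_ge0 // invfM mulrA.
  exact: eprob_active_ge.
split.
  rewrite mulrAC mulrC; apply: le_trans (step l (amax l i)).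
  rewrite ler_wpM2l //; apply: le_trans (_ : (1 - eps R k H) * p i l (amax l i) l <= _).
    by rewrite ler_wpM2l ?amax_max // subr_ge0.
  by rewrite ler_wpM2r ?p_ge0 ?eprob_amax_ge.
rewrite -!mulrA ler_wpM2r ?mulr_ge0 ?p_ge0 // -/(eps R k H) epsE.
by rewrite expRN_le_1Bhalf ?kH_ge0.
Qed.
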